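(* Let $\Omega\subset\mathbb{R}^d$ be a bounded domain with a mesh $\mathcal{M}$ as described in the context, let $0=t_0<t_1<\dots<t_N=T$ be a uniform time grid with step $\delta t$, and let $\gamma>1$. Let $(\rho_K^n,e_K^n,p_K^n)_{K\in\mathcal{M},0\le n\le N}$ be positive real numbers and $(u_{K,\sigma}^n)$ normal face velocities as in the context, satisfying, for every $K\in\mathcal{M}$ and $0\le n\le N-1$, the implicit scheme \[ \frac{|K|}{\delta t}(\rho_K^{n+1}-\rho_K^n)+\sum_{\sigma\in\mathcal{E}(K)}F_{K,\sigma}^{n+1}=0, \] \[ \frac{|K|}{\delta t}(\rho_K^{n+1}e_K^{n+1}-\rho_K^ne_K^n)+\sum_{\sigma\in\mathcal{E}(K)}F_{K,\sigma}^{n+1}e_\sigma^{n+1}+p_K^{n+1}\sum_{\sigma\in\mathcal{E}(K)}|\sigma|\,u_{K,\sigma}^{n+1}\ge 0, \qquad p_K^{n+1}=(\gamma-1)\rho_K^{n+1}e_K^{n+1}, \] where $F_{K,\sigma}^{n+1}=|\sigma|\,\rho_\sigma^{n+1}u_{K,\sigma}^{n+1}$, and where the face values are upwind: for $\sigma=K|L\in\mathcal{E}_{\rm int}$, $\rho_\sigma^{n+1}=\rho_K^{n+1}$ and $e_\sigma^{n+1}=e_K^{n+1}$ if $u_{K,\sigma}^{n+1}\ge0$, and $\rho_\sigma^{n+1}=\rho_L^{n+1}$, $e_\sigma^{n+1}=e_L^{n+1}$ otherwise. Then for every $K\in\mathcal{M}$ and $0\le n\le N-1$, \[ \frac{|K|}{\delta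 t}(\eta_K^{n+1}-\eta_K^n)+\sum_{\sigma\in\mathcal{E}(K)}|\sigma|\,\eta_\sigma^{n+1}u_{K,\sigma}^{n+1}\le 0, \] where $\eta_K^m=\varphi_\rho(\rho_K^m)+\rho_K^m\varphi_e(e_K^m)$ for $m=n,n+1$, and $\eta_\sigma^{n+1}=\varphi_\rho(\rho_\sigma^{n+1})+\rho_\sigma^{n+1}\varphi_e(e_\sigma^{n+1})$, with $\varphi_\rho(z)=z\log z$ and $\varphi_e(z)=-\frac{1}{\gamma-1}\log z$ for $z>0$.
   Context: Mesh: $\mathcal{M}$ is a finite decomposition of $\Omega$ into polytopal cells $K$, regular in the finite element sense; $\mathcal{E}$ is the set of $(d-1)$-faces, $\mathcal{E}(K)$ the faces of $K$ (bounded in number), $\mathcal{E}_{\rm int}$ the faces interior to $\Omega$, $\mathcal{E}_{\rm ext}$ those on $\partial\Omega$; an interior face separating cells $K$ and $L$ is written $\sigma=K|L$. $|K|$ is the $d$-measure of $K$ and $|\sigma|$ the $(d-1)$-measure of $\sigma$. For each $K$, $\sigma\in\mathcal{E}(K)$ and $n$, $u_{K,\sigma}^n\in\mathbb{R}$ approximates the outward normal velocity on $\sigma$; $u_{K,\sigma}^n=0$ for $\sigma\in\mathcal{E}_{\rm ext}$ (so all face terms on external faces vanish) and $u_{L,\sigma}^n=-u_{K,\sigma}^n$ for $\sigma=K|L$. Face values $\rho_\sigma^n,e_\sigma^n$ depend only on the face $\sigma$ and are positive; all $\rho_K^n,e_K^n$ are positive. *)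

From HB Require Import structures.
From mathcomp Require Import all_boot all_order all_algebra.
From mathcomp Require Import all_classical all_reals all_analysis.
Set Implicit Arguments. Unset Strict Implicit. Unset Printing Implicit Defensive.
Import Order.TTheory GRing.Theory Num.Theory.
Local Open Scope ring_scope.

Definition phi_rho (R : realType) (z : R) : R := z * ln z.
Definition phi_e (R : realType) (gamma z : R) : R := - ((gamma - 1)^-1 * ln z).
Definition eta_ent (R : realType) (gamma rho e : R) : R :=
  phi_rho rho + rho * phi_e gamma e.

From HB Require Import structures.
From mathcomp Require Import all_boot all_order all_algebra.
From mathcomp Require Import all_classical all_reals all_analysis.
From mathcomp Require Import ring lra.
Set Implicit Arguments. Unset Strict Implicit. Unset Printing Implicit Defensive.
Import Order.TTheory GRing.Theory Num.Theory.
Local Open Scope ring_scope.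

(* The entropy is a convex function of the conserved variables (rho, rho e).
   Multiply the mass balance and the internal energy inequality by the entropy
   gradient (a, b) at the new state; since b <= 0 this, together with the
   tangent inequality at the new state, bounds the discrete time derivative of
   the entropy, the equation of state turning b p into -rho. What remains is a
   sum over faces of u times the gap between the entropy of the face state and
   the tangent plane at the cell state: the gap is nonnegative, so inflow faces
   (u <= 0) contribute nonpositively, and on outflow faces upwinding makes it
   vanish. *)

Lemma ln_le_subr1 (R : realType) (x : R) : 0 < x -> ln x <= x - 1.
Proof. by move=> x0; have := expR_ge1Dx (ln x); rewrite lnK ?posrE //; lra. Qed.

Lemma ln_le_tangent (R : realType) (x y : R) : 0 < x -> 0 < y ->
  ln y <= ln x + (y - x) / x.
Proof.
move=> x0 y0; have := ln_le_subr1 (divr_gt0 y0 x0).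
by rewrite ln_div ?posrE // mulrBl divff ?gt_eqF //; lra.
Qed.

Lemma phi_rho_tangent (R : realType) (r s : R) : 0 < r -> 0 < s ->
  phi_rho r + (ln r + 1) * (s - r) <= phi_rho s.
Proof.
move=> r0 s0; have := ler_wpM2l (ltW s0) (ln_le_tangent s0 r0).
rewrite /phi_rho mulrDr mulrCA divff ?gt_eqF // mulr1; lra.
Qed.

Section Entropy.
Variables (R : realType) (gamma : R).
Hypothesis gamma_gt1 : 1 < gamma.

(* Partial derivatives of [eta_ent] in the conserved variables rho and rho e. *)
Definition deta_drho (r e : R) : R := ln r + 1 + phi_e gamma e + (gamma - 1)^-1.
Definition deta_dint (e : R) : R := - ((gamma - 1)^-1 / e).

Let ginv_gt0 : 0 < (gamma - 1)^-1.
Proof. by rewrite invr_gt0 subr_gt0. Qed.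

Lemma eta_ent_tangent (r e s f : R) : 0 < r -> 0 < e -> 0 < s -> 0 < f ->
  eta_ent gamma r e + deta_drho r e * (s - r) + deta_dint e * (s * f - r * e)
  <= eta_ent gamma s f.
Proof.
move=> r0 e0 s0 f0.
have convex_rho := phi_rho_tangent r0 s0.
have concave_ln := ler_wpM2l (ltW (mulr_gt0 ginv_gt0 s0)) (ln_le_tangent e0 f0).
have -> : deta_dint e * (s * f - r * e)
          = - ((gamma - 1)^-1 * (s * ((f - e) / e) + (s - r))).
  by rewrite /deta_dint; field; rewrite !gt_eqF // subr_gt0.
rewrite /eta_ent /deta_drho /phi_e; lra.
Qed.

Lemma eta_ent_euler (r e : R) : 0 < e ->
  deta_drho r e * r + deta_dint e * (r * e) = eta_ent gamma r e + r.
Proof.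
move=> e0; rewrite /deta_drho /deta_dint /eta_ent /phi_rho; field.
by rewrite !gt_eqF // subr_gt0.
Qed.

Lemma deta_dint_pressure (r e : R) : 0 < e ->
  deta_dint e * ((gamma - 1) * r * e) = - r.
Proof.
move=> e0; rewrite /deta_dint; field.
by rewrite !gt_eqF // subr_gt0.
Qed.

Lemma upwind_face_entropy_le (r e rs es u : R) :
  0 < r -> 0 < e -> 0 < rs -> 0 < es ->
  (0 < u -> rs = r /\ es = e) ->
  u * (eta_ent gamma rs es - deta_drho r e * rs - deta_dint e * (rs * es) + r) <= 0.
Proof.
move=> r0 e0 rs0 es0 upwind.
have [u_gt0|u_le0] := ltP 0 u.
  have [-> ->] := upwind u_gt0.
  suff -> : eta_ent gamma r e - deta_drho r e * r - deta_dint e * (r * e) + r = 0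
    by rewrite mulr0.
  by have := eta_ent_euler r e0; lra.
apply: mulr_le0_ge0 => //.
have := eta_ent_tangent r0 e0 rs0 es0; have := eta_ent_euler r e0; lra.
Qed.

Lemma cell_entropy_inequality (face : finType) (S : {set face}) (mF : face -> R)
    (c r0 e0 r1 e1 p1 : R) (rhoF eF u : face -> R) :
  0 < c -> 0 < r0 -> 0 < e0 -> 0 < r1 -> 0 < e1 ->
  (forall s, s \in S -> [/\ 0 <= mF s, 0 < rhoF s & 0 < eF s]) ->
  (forall s, s \in S -> 0 < u s -> rhoF s = r1 /\ eF s = e1) ->
  c * (r1 - r0) + \sum_(s in S) mF s * rhoF s * u s = 0 ->
  0 <= c * (r1 * e1 - r0 * e0) + \sum_(s in S) mF s * rhoF s * u s * eF s
       + p1 * \sum_(s in S) mF s * u s ->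
  p1 = (gamma - 1) * r1 * e1 ->
  c * (eta_ent gamma r1 e1 - eta_ent gamma r0 e0)
  + \sum_(s in S) mF s * eta_ent gamma (rhoF s) (eF s) * u s <= 0.
Proof.
move=> c0 r0_gt0 e0_gt0 r1_gt0 e1_gt0 face_pos upwind mass energy eos.
set a := deta_drho r1 e1; set b := deta_dint e1.
have b_le0 : b <= 0 by rewrite /b /deta_dint oppr_le0 ltW ?divr_gt0.
have time_step : c * (eta_ent gamma r1 e1 - eta_ent gamma r0 e0)
                 <= c * (a * (r1 - r0) + b * (r1 * e1 - r0 * e0)).
  rewrite ler_pM2l //.
  by have := eta_ent_tangent r1_gt0 e1_gt0 r0_gt0 e0_gt0; rewrite -/a -/b; lra.
have energy_b : b * (c * (r1 * e1 - r0 * e0))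
   <= - b * \sum_(s in S) mF s * rhoF s * u s * eF s + r1 * \sum_(s in S) mF s * u s.
  have pressure : b * p1 = - r1 by rewrite eos deta_dint_pressure.
  have := mulr_le0_ge0 b_le0 energy.
  by rewrite !mulrDr [b * (p1 * _)]mulrA pressure; lra.
have faces : \sum_(s in S) mF s * eta_ent gamma (rhoF s) (eF s) * u s
     - a * \sum_(s in S) mF s * rhoF s * u s
     - b * \sum_(s in S) mF s * rhoF s * u s * eF s
     + r1 * \sum_(s in S) mF s * u s <= 0.
  rewrite !mulr_sumr -!sumrN -!big_split /=.
  apply: sumr_le0 => s sS; have [mF0 rs0 es0] := face_pos s sS.
  have := upwind_face_entropy_le r1_gt0 e1_gt0 rs0 es0 (upwind s sS).
  rewrite -/a -/b => face_le0.
  by have := mulr_ge0_le0 mF0 face_le0; lra.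
have mass_a : a * (c * (r1 - r0) + \sum_(s in S) mF s * rhoF s * u s) = 0.
  by rewrite mass mulr0.
lra.
Qed.

End Entropy.

Theorem theorem2p3 (R : realType) (cell face : finType)
  (EK : cell -> {set face}) (ext : {set face})
  (measK : cell -> R) (measF : face -> R)
  (N : nat) (dt gamma : R)
  (rho e p : nat -> cell -> R) (u : nat -> cell -> face -> R)
  (rhoF eF : nat -> face -> R) :
  (* mesh: positive measures *)
  (forall K, 0 < measK K) -> (forall s, 0 < measF s) ->
  (* an interior face separates exactly two distinct cells *)
  (forall s, s \notin ext -> exists K L, [/\ K != L, s \in EK K, s \in EK L &
       forall M, s \in EK M -> M = K \/ M = L]) ->
  (* an external face belongs to exactly one cell *)
  (forall s, s \in ext -> exists K, s \in EK K /\
       forall M, s \in EK M -> M = K) ->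
  (* time step, adiabatic exponent *)
  0 < dt -> 1 < gamma ->
  (* positivity *)
  (forall n K, (n <= N)%N -> [/\ 0 < rho n K, 0 < e n K & 0 < p n K]) ->
  (forall n s, (n <= N)%N -> 0 < rhoF n s /\ 0 < eF n s) ->
  (* normal velocities: zero on external faces, antisymmetric on interior faces *)
  (forall n K s, s \in EK K -> s \in ext -> u n K s = 0) ->
  (forall n K L s, s \notin ext -> K != L -> s \in EK K -> s \in EK L ->
       u n L s = - u n K s) ->
  (* upwind face values *)
  (forall n K s, (n < N)%N -> s \in EK K -> s \notin ext -> 0 < u n.+1 K s ->
       rhoF n.+1 s = rho n.+1 K /\ eF n.+1 s = e n.+1 K) ->
  (* mass balance *)
  (forall n K, (n < N)%N ->
     measK K / dt * (rho n.+1 K - rho n K)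
     + \sum_(s in EK K) measF s * rhoF n.+1 s * u n.+1 K s = 0) ->
  (* internal energy balance (inequality) *)
  (forall n K, (n < N)%N ->
     0 <= measK K / dt * (rho n.+1 K * e n.+1 K - rho n K * e n K)
     + \sum_(s in EK K) measF s * rhoF n.+1 s * u n.+1 K s * eF n.+1 s
     + p n.+1 K * \sum_(s in EK K) measF s * u n.+1 K s) ->
  (* equation of state *)
  (forall n K, (n < N)%N -> p n.+1 K = (gamma - 1) * rho n.+1 K * e n.+1 K) ->
  (* conclusion: discrete entropy inequality *)
  forall n K, (n < N)%N ->
     measK K / dt * (eta_ent gamma (rho n.+1 K) (e n.+1 K) - eta_ent gamma (rho n K) (e n K))
     + \sum_(s in EK K) measF s * eta_ent gamma (rhoF n.+1 s) (eF n.+1 s) * u n.+1 K s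
     <= 0.
Proof.
move=> measK_gt0 measF_gt0 _ _ dt_gt0 gamma_gt1 pos posF u_ext _ upwind
  mass energy eos n K ltnN.
have [r1_gt0 e1_gt0 _] := pos n.+1 K ltnN.
have [r0_gt0 e0_gt0 _] := pos n K (ltnW ltnN).
apply: (cell_entropy_inequality gamma_gt1 _ r0_gt0 e0_gt0 r1_gt0 e1_gt0 _ _
          (mass n K ltnN) (energy n K ltnN) (eos n K ltnN)).
- by rewrite divr_gt0.
- by move=> s _; have [rs es] := posF n.+1 s ltnN; rewrite ltW.
- move=> s sK u_gt0; apply: upwind => //.
  by apply: contraTN u_gt0 => s_ext; rewrite u_ext ?ltxx.
Qed.
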